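(* Let $d\ge3$, $R_d=\{0,1,\dots,d-1\}$, and $r_d:\mathbb{Z}\to R_d$ the remainder modulo $d$. Define $\psi_d:R_d\times R_d\to R_d$, $\psi_d(k,i)=r_d(k+2i)$, and $\varphi_{d,\pm}:R_d\times R_d\to R_d$, $\varphi_{d,\pm}(k,i)=r_d(i\pm k)$. For $u\in R_d$ let $D^s_u=\{L^s_{k,i}\in\mathcal{L}^s: \psi_d(k,i)=u\}$ for $s=1,2$, and $D^0_{u,\pm}=\{L^0_{k,i}\in\mathcal{L}^0:\varphi_{d,\pm}(k,i)=u\}$. Then: (a) for every $i$, the restrictions of $\psi_d$ and of $\varphi_{d,\pm}$ to $R_d\times\{i\}$ are bijections onto $R_d$; (b) for every $k$, the restriction of $\varphi_{d,\pm}$ to $\{k\}\times R_d$ is a bijection onto $R_d$; (c) if $d$ is odd, for every $k$ the restriction of $\psi_d$ to $\{k\}\times R_d$ is a bijection onto $R_d$; (d) $\#\psi_d^{-1}(u)=d$ and $\#\varphi_{d,\pm}^{-1}(u)=d$ for all $u\in R_d$; (e) $D^0_{u,\pm}\subset\mathcal{L}^0$ and $D^s_u\subset\mathcal{L}^s$ ($s=1,2$) are families of $d$ pairwise disjoint lines.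
   Context: ${\rm F}_d\subset\mathbb{P}^3(\mathbb{C})$ is the surface $x^d-y^d-z^d+w^d=0$. Fix a primitive $d$-th root of unity $\eta$ and $v\in\mathbb{C}$ with $v^d=-1$. For $k,i\in R_d$ define the lines $L^0_{k,i}:\{y=\eta^i x,\ w=\eta^k z\}$, $L^1_{k,i}:\{x=\eta^{k+i}z,\ y=\eta^i w\}$, $L^2_{k,i}:\{x=v\eta^i w,\ y=v\eta^{k+i}z\}$, and $\mathcal{L}^s=\{L^s_{k,i}\}_{k,i\in R_d}$. *)

From HB Require Import structures.
From mathcomp Require Import all_boot all_order all_algebra.
Set Implicit Arguments. Unset Strict Implicit. Unset Printing Implicit Defensive.
Import Order.TTheory GRing.Theory Num.Theory.
Local Open Scope ring_scope.

(* R_d is modelled by the ordinal type 'I_d = {0,...,d-1}. *)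
Lemma ord_pos (d : nat) (k : 'I_d) : (0 < d)%N.
Proof. exact: leq_ltn_trans (leq0n k) (ltn_ord k). Qed.

Definition psi (d : nat) (k i : 'I_d) : 'I_d :=
  Ordinal (ltn_pmod (k + 2 * i)%N (ord_pos k)).
Definition phip (d : nat) (k i : 'I_d) : 'I_d :=
  Ordinal (ltn_pmod (i + k)%N (ord_pos k)).
(* phi_{d,-}(k,i) = r_d(i - k); since 0 <= k < d, r_d(i - k) = r_d(i + (d - k)) *)
Definition phim (d : nat) (k i : 'I_d) : 'I_d :=
  Ordinal (ltn_pmod (i + (d - k))%N (ord_pos k)).

(* A line is given as the predicate on C^4 of its (homogeneous) linear
   equations; a point of P^3 lies on it iff some/any nonzero representative
   satisfies the equations. *)
Section Lines.
Variable C : numClosedFieldType.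

Definition L0 (eta : C) (k i : nat) (x y z w : C) : Prop :=
  y = eta ^+ i * x /\ w = eta ^+ k * z.
Definition L1 (eta : C) (k i : nat) (x y z w : C) : Prop :=
  x = eta ^+ (k + i) * z /\ y = eta ^+ i * w.
Definition L2 (eta v : C) (k i : nat) (x y z w : C) : Prop :=
  x = v * eta ^+ i * w /\ y = v * eta ^+ (k + i) * z.

(* Two lines of P^3 are disjoint iff they have no common point, i.e. no
   common nonzero vector of homogeneous coordinates. *)
Definition disjoint_lines (L L' : C -> C -> C -> C -> Prop) : Prop :=
  forall x y z w, L x y z w -> L' x y z w ->
    x = 0 /\ y = 0 /\ z = 0 /\ w = 0.
End Lines.

(* The family { L_(k,i) : f(k,i) = u } consists of d pairwise disjoint lines:
   the index set has d elements and lines with distinct indices are disjoint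
   (hence also distinct, lines being nonempty). *)
Definition family_of_d_disjoint_lines (C : numClosedFieldType) (d : nat)
    (f : 'I_d -> 'I_d -> 'I_d) (u : 'I_d)
    (L : nat -> nat -> C -> C -> C -> C -> Prop) : Prop :=
  #|[set p : 'I_d * 'I_d | f p.1 p.2 == u]| = d /\
  forall k i k' i' : 'I_d, f k i = u -> f k' i' = u -> (k, i) != (k', i') ->
    disjoint_lines (L k i) (L k' i').

From HB Require Import structures.
From mathcomp Require Import all_boot all_order all_algebra.
Import Order.TTheory GRing.Theory Num.Theory.
Local Open Scope ring_scope.
Set Implicit Arguments. Unset Strict Implicit.

(* Every statement is a congruence modulo d: each of psi, phi_+ and phi_- is
   injective (hence bijective) in each variable, except psi in i, where 2 i
   must be cancelled and d odd is needed.  A fibre psi = u (or phi = u) is then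
   the graph of a bijection, so it has d points, and two distinct points of it
   differ in both "exponents" of the line equations (for psi: in i and in
   k + i); distinct powers of the primitive root eta force the common points
   of the two lines to have all coordinates 0. *)

Section ModularArithmetic.
Variable d : nat.

Lemma eq_mod_ord (a b : 'I_d) : (a == b %[mod d])%N = (a == b).
Proof. by rewrite !modn_small. Qed.

Lemma bij_of_inj_mod (f : 'I_d -> 'I_d) :
  (forall a b, f a = f b -> (a == b %[mod d])%N) -> bijective f.
Proof. by move=> f_inj; apply: injF_bij => a b /f_inj; rewrite eq_mod_ord => /eqP. Qed.

Lemma eqn_mod_subl (a b : nat) : (a <= d)%N -> (b <= d)%N ->
  (d - a == d - b %[mod d])%N = (a == b %[mod d])%N.
Proof.
move=> le_ad le_bd; rewrite -(eqn_modDr (a + b)) addnA subnK // addnCA subnK //.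
by rewrite modnDl modnDr eq_sym.
Qed.

Lemma eqn_mod_coprimeMl (p m n : nat) : coprime d p ->
  (p * m == p * n %[mod d])%N = (m == n %[mod d])%N.
Proof.
move=> co_dp; wlog le_nm : m n / (n <= m)%N.
  by move=> W; case: (leqP n m) => [|/ltnW] ?; [|rewrite eq_sym [RHS]eq_sym]; apply: W.
by rewrite !eqn_mod_dvd ?leq_mul2l ?le_nm ?orbT // -mulnBr Gauss_dvdr.
Qed.

End ModularArithmetic.

Section IndexMaps.
Variable d : nat.
Implicit Types (k i : 'I_d).

Lemma bij_psi_fst i : bijective (fun k => psi k i).
Proof. by apply: bij_of_inj_mod => a b /(congr1 val) /eqP; rewrite eqn_modDr. Qed.

Lemma bij_psi_snd k : odd d -> bijective (fun i => psi k i).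
Proof.
move=> odd_d; apply: bij_of_inj_mod => a b /(congr1 val) /eqP.
by rewrite eqn_modDl eqn_mod_coprimeMl // coprimen2.
Qed.

Lemma bij_phip_fst i : bijective (fun k => phip k i).
Proof. by apply: bij_of_inj_mod => a b /(congr1 val) /eqP; rewrite eqn_modDl. Qed.

Lemma bij_phip_snd k : bijective (fun i => phip k i).
Proof. by apply: bij_of_inj_mod => a b /(congr1 val) /eqP; rewrite eqn_modDr. Qed.

Lemma bij_phim_fst i : bijective (fun k => phim k i).
Proof.
apply: bij_of_inj_mod => a b /(congr1 val) /eqP.
by rewrite eqn_modDl eqn_mod_subl // ltnW.
Qed.

Lemma bij_phim_snd k : bijective (fun i => phim k i).
Proof. by apply: bij_of_inj_mod => a b /(congr1 val) /eqP; rewrite eqn_modDr. Qed.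

Lemma psi_fiber_sum_neq k i k' i' : psi k i = psi k' i' -> i != i' ->
  ~~ (k + i == k' + i' %[mod d])%N.
Proof.
move=> /(congr1 val) /= /eqP e_psi; apply: contra => e_sum.
rewrite -eq_mod_ord -(eqn_modDl (k' + i')); move: e_psi.
by rewrite !mul2n -!addnn !addnA -modnDml (eqP e_sum) modnDml.
Qed.

End IndexMaps.

Section Fibers.
Variables (d : nat) (f : 'I_d -> 'I_d -> 'I_d) (u : 'I_d).

Lemma card_fiber_bij_fst :
  (forall i, bijective (fun k => f k i)) ->
  #|[set p : 'I_d * 'I_d | f p.1 p.2 == u]| = d.
Proof.
move=> f_bij; rewrite -[RHS]card_ord -cardsT -(@card_in_imset _ _ snd).
  apply: eq_card => i; rewrite in_setT; apply/imsetP.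
  have [g _ gK] := f_bij i; exists (g u, i) => //.
  by rewrite inE /= gK.
move=> [k i] [k' i']; rewrite !inE /= => /eqP e1 /eqP e2 /= ei; subst i'.
have [g fK _] := f_bij i.
by rewrite -[k]fK -[k']fK /= e1 e2.
Qed.

Lemma fiber_neq_snd k i k' i' : (forall i, bijective (fun k => f k i)) ->
  f k i = u -> f k' i' = u -> (k, i) != (k', i') -> i != i'.
Proof.
move=> f_bij e1 e2; apply: contraNneq => ei; rewrite -{}ei in e2 *.
have [g fK _] := f_bij i.
by rewrite -[k]fK -[k']fK /= e1 e2.
Qed.

Lemma fiber_neq_fst k i k' i' : (forall k, bijective (fun i => f k i)) ->
  f k i = u -> f k' i' = u -> (k, i) != (k', i') -> k != k'.
Proof.
move=> f_bij e1 e2; apply: contraNneq => ek; rewrite -{}ek in e2 *.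
have [g fK _] := f_bij k.
by rewrite -[i]fK -[i']fK /= e1 e2.
Qed.

End Fibers.

Section Lines.
Variable C : numClosedFieldType.

Lemma mul_distinct_eq0 (a b x : C) : a != b -> a * x = b * x -> x = 0.
Proof. by move=> neq_ab eq_abx; apply: contraNeq neq_ab => /mulIf/(_ _ _ eq_abx) ->. Qed.

Lemma L0_disjoint (eta : C) (k i k' i' : nat) :
  eta ^+ i != eta ^+ i' -> eta ^+ k != eta ^+ k' ->
  disjoint_lines (L0 eta k i) (L0 eta k' i').
Proof.
move=> neq_i neq_k x y z w [-> ->] [e_y e_w].
have x0 := mul_distinct_eq0 neq_i e_y; have z0 := mul_distinct_eq0 neq_k e_w.
by rewrite x0 z0 !mulr0.
Qed.

Lemma L1_disjoint (eta : C) (k i k' i' : nat) :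
  eta ^+ (k + i) != eta ^+ (k' + i') -> eta ^+ i != eta ^+ i' ->
  disjoint_lines (L1 eta k i) (L1 eta k' i').
Proof.
move=> neq_ki neq_i x y z w [-> ->] [e_x e_y].
have z0 := mul_distinct_eq0 neq_ki e_x; have w0 := mul_distinct_eq0 neq_i e_y.
by rewrite z0 w0 !mulr0.
Qed.

Lemma L2_disjoint (eta v : C) (k i k' i' : nat) : v != 0 ->
  eta ^+ i != eta ^+ i' -> eta ^+ (k + i) != eta ^+ (k' + i') ->
  disjoint_lines (L2 eta v k i) (L2 eta v k' i').
Proof.
move=> v_neq0 neq_i neq_ki x y z w [-> ->] [e_x e_y].
have w0 : w = 0 by apply: mul_distinct_eq0 e_x; rewrite (inj_eq (mulfI v_neq0)).
have z0 : z = 0 by apply: mul_distinct_eq0 e_y; rewrite (inj_eq (mulfI v_neq0)).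
by rewrite z0 w0 !mulr0.
Qed.

Variables (d : nat) (eta : C).
Hypothesis eta_prim : d.-primitive_root eta.

Lemma prim_expr_ord_neq (a b : 'I_d) : a != b -> eta ^+ a != eta ^+ b.
Proof. by rewrite (eq_prim_root_expr eta_prim) eq_mod_ord. Qed.

Lemma L0_family (f : 'I_d -> 'I_d -> 'I_d) (u : 'I_d) :
  (forall i, bijective (fun k => f k i)) ->
  (forall k, bijective (fun i => f k i)) ->
  family_of_d_disjoint_lines f u (L0 eta).
Proof.
move=> bij_fst bij_snd; split; first exact: card_fiber_bij_fst.
move=> k i k' i' e1 e2 neq_ki; apply: L0_disjoint; apply: prim_expr_ord_neq.
  exact: fiber_neq_snd bij_fst e1 e2 neq_ki.
exact: fiber_neq_fst bij_snd e1 e2 neq_ki.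
Qed.

Lemma psi_L1_family (u : 'I_d) : family_of_d_disjoint_lines (@psi d) u (L1 eta).
Proof.
split; first exact/card_fiber_bij_fst/bij_psi_fst.
move=> k i k' i' e1 e2 neq_ki.
have neq_i := fiber_neq_snd (@bij_psi_fst d) e1 e2 neq_ki.
apply: L1_disjoint; last exact: prim_expr_ord_neq.
by rewrite (eq_prim_root_expr eta_prim) psi_fiber_sum_neq // e1 e2.
Qed.

Lemma psi_L2_family (v : C) (u : 'I_d) : v != 0 ->
  family_of_d_disjoint_lines (@psi d) u (L2 eta v).
Proof.
move=> v_neq0; split; first exact/card_fiber_bij_fst/bij_psi_fst.
move=> k i k' i' e1 e2 neq_ki.
have neq_i := fiber_neq_snd (@bij_psi_fst d) e1 e2 neq_ki.
apply: L2_disjoint => //; first exact: prim_expr_ord_neq.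
by rewrite (eq_prim_root_expr eta_prim) psi_fiber_sum_neq // e1 e2.
Qed.

End Lines.

Theorem proposition2p2 (C : numClosedFieldType) (d : nat) (eta v : C) :
  (3 <= d)%N -> d.-primitive_root eta -> v ^+ d = -1 ->
  (* (a) *)
  (forall i : 'I_d,
     bijective (fun k : 'I_d => psi k i) /\
     bijective (fun k : 'I_d => phip k i) /\
     bijective (fun k : 'I_d => phim k i)) /\
  (* (b) *)
  (forall k : 'I_d,
     bijective (fun i : 'I_d => phip k i) /\
     bijective (fun i : 'I_d => phim k i)) /\
  (* (c) *)
  (odd d -> forall k : 'I_d, bijective (fun i : 'I_d => psi k i)) /\
  (* (d) *)
  (forall u : 'I_d,
     #|[set p : 'I_d * 'I_d | psi p.1 p.2 == u]| = d /\
     #|[set p : 'I_d * 'I_d | phip p.1 p.2 == u]| = d /\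
     #|[set p : 'I_d * 'I_d | phim p.1 p.2 == u]| = d) /\
  (* (e) *)
  (forall u : 'I_d,
     family_of_d_disjoint_lines (@phip d) u (fun k i => @L0 C eta k i) /\
     family_of_d_disjoint_lines (@phim d) u (fun k i => @L0 C eta k i) /\
     family_of_d_disjoint_lines (@psi d) u (fun k i => @L1 C eta k i) /\
     family_of_d_disjoint_lines (@psi d) u (fun k i => @L2 C eta v k i)).
Proof.
move=> d_ge3 eta_prim v_d.
have v_neq0 : v != 0.
  apply/eqP => v0; move: v_d; rewrite v0 expr0n gtn_eqF ?(leq_trans _ d_ge3) //.
  by move/eqP; rewrite eq_sym oppr_eq0 oner_eq0.
split; [|split; [|split; [|split]]].
- by move=> i; split; [|split]; [exact: bij_psi_fst|exact: bij_phip_fst|exact: bij_phim_fst].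
- by move=> k; split; [exact: bij_phip_snd|exact: bij_phim_snd].
- by move=> odd_d k; exact: bij_psi_snd.
- by move=> u; split; [|split]; apply: card_fiber_bij_fst;
    [exact: bij_psi_fst|exact: bij_phip_fst|exact: bij_phim_fst].
- move=> u; split; [|split; [|split]].
  + exact: L0_family (@bij_phip_fst d) (@bij_phip_snd d).
  + exact: L0_family (@bij_phim_fst d) (@bij_phim_snd d).
  + exact: psi_L1_family.
  + exact: psi_L2_family.
Qed.
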